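(* For every $\lambda$-term $A$ there is a clean $\lambda$-term $B$ such that $A\twoheadrightarrow_{\alpha'}B$.
   Context: $\lambda$-terms over an infinite variable set $\mathcal V$: $\mathcal M ::= \mathcal V \mid (\lambda\mathcal V.\mathcal M)\mid(\mathcal M\mathcal M)$. $FV(C)$ is the set of variables with a free occurrence in $C$ (occurrences inside the body of $\lambda v.\cdot$, or the $v$ of $\lambda v$, are bound); $BV(C)$ is the set of $v$ such that $\lambda v$ occurs in $C$; $FV(vA)=\{v\}\cup FV(A)$. A term $A$ is clean iff $BV(A)\cap FV(A)=\emptyset$ and for every variable $v$, $\lambda v$ occurs at most once in $A$. Grafting $A\{v:=B\}$: $v\{v:=B\}=B$; $v'\{v:=B\}=v'$ if $v'\neq v$; $(AC)\{v:=B\}=A\{v:=B\}C\{v:=B\}$; $(\lambda v.A)\{v:=B\}=\lambda v.A$; $(\lambda v'.A)\{v:=B\}=\lambda v'.A\{v:=B\}$ if $v\neq v'$. $\to_{\alpha'}$ is the least relation closed under $A\mapsto AC$, $A\mapsto CA$, $A\mapsto\lambda u.A$ (compatible) containing $\lambda v.A\to_{\alpha'}\lambda v'.A\{v:=v'\}$ whenever $v'\notin FV(vA)$ and $v,v'\notin BV(A)$; $\twoheadrightarrow_{\alpha'}$ is its reflexive transitive closure. *)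

From Stdlib Require Import Arith List Relations.
Import ListNotations.

Definition var := nat.

Inductive term : Type :=
| Var : var -> term
| Lam : var -> term -> term
| App : term -> term -> term.

Fixpoint FV (t : term) (x : var) : Prop :=
  match t with
  | Var y => x = y
  | Lam y a => x <> y /\ FV a x
  | App a b => FV a x \/ FV b x
  end.

Fixpoint BV (t : term) (x : var) : Prop :=
  match t with
  | Var _ => False
  | Lam y a => x = y \/ BV a x
  | App a b => BV a x \/ BV b x
  end.

Fixpoint binder_count (t : term) (x : var) : nat :=
  match t with
  | Var _ => 0
  | Lam y a => (if Nat.eqb x y then 1 else 0) + binder_count a x
  | App a b => binder_count a x + binder_count b x
  end.

Definition clean (A : term) : Prop :=
  (forall v, ~ (BV A v /\ FV A v)) /\ (forall v, binder_count A v <= 1).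

Fixpoint graft (A : term) (v : var) (B : term) : term :=
  match A with
  | Var y => if Nat.eqb y v then B else Var y
  | App a c => App (graft a v B) (graft c v B)
  | Lam y a => if Nat.eqb y v then Lam y a else Lam y (graft a v B)
  end.

Inductive alpha1 : term -> term -> Prop :=
| alpha1_base : forall v v' A,
    ~ (v' = v \/ FV A v') -> ~ BV A v -> ~ BV A v' ->
    alpha1 (Lam v A) (Lam v' (graft A v (Var v')))
| alpha1_appl : forall A A' C, alpha1 A A' -> alpha1 (App A C) (App A' C)
| alpha1_appr : forall A A' C, alpha1 A A' -> alpha1 (App C A) (App C A')
| alpha1_lam : forall u A A', alpha1 A A' -> alpha1 (Lam u A) (Lam u A').

Definition alpha_star : term -> term -> Prop := clos_refl_trans term alpha1.

From Stdlib Require Import Arith Relations Lia.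

(* Rename the binders of A one by one, innermost first, to variables m, m+1, ...
   taken above every variable of A.  When the binder λv.a' is renamed to a fresh
   m, the body a' has already been cleaned with binders below m, so neither v nor
   m is bound in a' and the α'-step is legal.  Distinct fresh names make every
   binder unique, and since they exceed all free variables (which renaming never
   changes) no variable is both bound and free. *)

Lemma clos_rt_map (A B : Type) (R : relation A) (S : relation B) (f : A -> B) :
  (forall x y, R x y -> S (f x) (f y)) ->
  forall x y, clos_refl_trans A R x y -> clos_refl_trans B S (f x) (f y).
Proof.
  intros Hf x y Hxy; induction Hxy.
  - apply rt_step; auto.
  - apply rt_refl.
  - eapply rt_trans; eauto.
Qed.

Lemma alpha_star_app (a a' b b' : term) :
  alpha_star a a' -> alpha_star b b' -> alpha_star (App a b) (App a' b').
Proof.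
  intros Ha Hb; apply rt_trans with (App a' b).
  - exact (clos_rt_map _ _ _ _ (fun t => App t b) (fun _ _ => alpha1_appl _ _ b) _ _ Ha).
  - exact (clos_rt_map _ _ _ _ (App a') (fun _ _ => alpha1_appr _ _ a') _ _ Hb).
Qed.

Lemma alpha_star_lam (u : var) (a a' : term) :
  alpha_star a a' -> alpha_star (Lam u a) (Lam u a').
Proof. exact (clos_rt_map _ _ _ _ (Lam u) (alpha1_lam u) a a'). Qed.

Lemma BV_of_binder_count (t : term) (x : var) : binder_count t x <> 0 -> BV t x.
Proof.
  induction t; simpl; intros H.
  - lia.
  - destruct (Nat.eqb_spec x v); auto.
  - destruct (Nat.eq_dec (binder_count t1 x) 0); [right; apply IHt2; lia | auto].
Qed.

Lemma BV_graft_var (a : term) (v y x : var) : BV (graft a v (Var y)) x <-> BV a x.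
Proof.
  induction a; simpl.
  - destruct (Nat.eqb v0 v); simpl; tauto.
  - destruct (Nat.eqb v0 v); simpl; [tauto | rewrite IHa; tauto].
  - rewrite IHa1, IHa2; tauto.
Qed.

Lemma binder_count_graft_var (a : term) (v y x : var) :
  binder_count (graft a v (Var y)) x = binder_count a x.
Proof.
  induction a; simpl.
  - destruct (Nat.eqb v0 v); reflexivity.
  - destruct (Nat.eqb v0 v); simpl; auto.
  - rewrite IHa1, IHa2; reflexivity.
Qed.

Lemma FV_graft_var (a : term) (v y x : var) : ~ BV a y -> ~ BV a v ->
  FV (graft a v (Var y)) x <-> (FV a x /\ x <> v) \/ (x = y /\ FV a v).
Proof.
  revert v; induction a as [w | w a IHa | a1 IHa1 a2 IHa2]; simpl; intros v Hy Hv.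
  - destruct (Nat.eqb_spec w v); simpl; subst; intuition congruence.
  - destruct (Nat.eqb_spec w v); [exfalso; apply Hv; auto |]; simpl.
    rewrite IHa by tauto; intuition congruence.
  - rewrite IHa1, IHa2 by tauto; tauto.
Qed.

Definition vars_below (t : term) (n : nat) : Prop :=
  forall x, FV t x \/ BV t x -> x < n.

Definition clean_variant (n m : nat) (t t' : term) : Prop :=
  n <= m /\ alpha_star t t' /\ (forall x, FV t' x <-> FV t x) /\
  (forall x, BV t' x -> n <= x < m) /\ (forall x, binder_count t' x <= 1).

Lemma clean_variant_var (n : nat) (v : var) : clean_variant n n (Var v) (Var v).
Proof.
  split; [lia |]. split; [apply rt_refl |].
  split; [tauto |]. split; [contradiction |]. simpl; lia.
Qed.

Lemma clean_variant_lam (n m : nat) (v : var) (a a' : term) :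
  vars_below (Lam v a) n -> clean_variant n m a a' ->
  clean_variant n (S m) (Lam v a) (Lam m (graft a' v (Var m))).
Proof.
  intros Hn [Hnm [Ha [Hfv [Hbv Hbc]]]].
  assert (Hv : v < n) by (apply Hn; simpl; auto).
  assert (Hm_free : ~ FV a m).
  { intro H; destruct (Nat.eq_dec m v); [lia |].
    assert (m < n) by (apply Hn; simpl; auto). lia. }
  assert (Hv_bound : ~ BV a' v) by (intro H; apply Hbv in H; lia).
  assert (Hm_bound : ~ BV a' m) by (intro H; apply Hbv in H; lia).
  split; [lia |]. split; [| split; [| split]].
  - apply rt_trans with (Lam v a'); [now apply alpha_star_lam |].
    apply rt_step, alpha1_base; auto.
    rewrite Hfv; intros [H | H]; [lia | auto].
  - intro x; simpl; rewrite FV_graft_var, Hfv by auto.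
    split; [intuition congruence |].
    intros [Hxv Hx]; split; [intros ->; auto | auto].
  - simpl; intros x [-> | H]; [lia |].
    rewrite BV_graft_var in H; apply Hbv in H; lia.
  - intro x; simpl; rewrite binder_count_graft_var.
    destruct (Nat.eqb_spec x m) as [-> |]; [| apply Hbc].
    destruct (Nat.eq_dec (binder_count a' m) 0); [lia |].
    exfalso; apply Hm_bound, BV_of_binder_count; auto.
Qed.

Lemma clean_variant_app (n m k : nat) (a b a' b' : term) :
  clean_variant n m a a' -> clean_variant m k b b' ->
  clean_variant n k (App a b) (App a' b').
Proof.
  intros [Hnm [Ha [Hfa [Hba Hca]]]] [Hmk [Hb [Hfb [Hbb Hcb]]]].
  split; [lia |]. split; [now apply alpha_star_app |].
  split; [intro x; simpl; rewrite Hfa, Hfb; tauto |]. split.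
  - simpl; intros x [H | H]; [apply Hba in H | apply Hbb in H]; lia.
  - intro x; simpl.
    destruct (Nat.eq_dec (binder_count a' x) 0) as [| Ha0]; [specialize (Hcb x); lia |].
    destruct (Nat.eq_dec (binder_count b' x) 0) as [| Hb0]; [specialize (Hca x); lia |].
    apply BV_of_binder_count, Hba in Ha0; apply BV_of_binder_count, Hbb in Hb0; lia.
Qed.

Lemma clean_variant_exists (t : term) (n : nat) :
  vars_below t n -> exists m t', clean_variant n m t t'.
Proof.
  revert n; induction t as [v | v a IHa | a IHa b IHb]; intros n Hn.
  - exists n, (Var v); apply clean_variant_var.
  - destruct (IHa n) as [m [a' Ha']].
    { intros x Hx; apply Hn; simpl; destruct (Nat.eq_dec x v); tauto. }
    exists (S m), (Lam m (graft a' v (Var m))); now apply clean_variant_lam.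
  - destruct (IHa n) as [m [a' Ha']].
    { intros x Hx; apply Hn; simpl; tauto. }
    destruct (IHb m) as [k [b' Hb']].
    { intros x Hx; destruct Ha' as [Hnm _].
      assert (x < n) by (apply Hn; simpl; tauto); lia. }
    exists k, (App a' b'); eapply clean_variant_app; eauto.
Qed.

Lemma clean_of_clean_variant (n m : nat) (t t' : term) :
  vars_below t n -> clean_variant n m t t' -> clean t'.
Proof.
  intros Hn [_ [_ [Hfv [Hbv Hbc]]]]; split; auto.
  intros x [Hb Hf]; apply Hbv in Hb; apply Hfv in Hf.
  assert (x < n) by (apply Hn; auto); lia.
Qed.

Fixpoint maxvar (t : term) : var :=
  match t with
  | Var y => y
  | Lam y a => max y (maxvar a)
  | App a b => max (maxvar a) (maxvar b)
  end.

Lemma vars_below_maxvar (t : term) : vars_below t (S (maxvar t)).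
Proof.
  induction t as [v | v a IHa | a IHa b IHb]; unfold vars_below in *; simpl; intros x Hx.
  - destruct Hx as [-> | []]; lia.
  - destruct (Nat.eq_dec x v) as [-> | Hxv]; [lia |].
    assert (x < S (maxvar a)) by (apply IHa; tauto); lia.
  - destruct Hx as [[H | H] | [H | H]];
      [ specialize (IHa x (or_introl H)) | specialize (IHb x (or_introl H))
      | specialize (IHa x (or_intror H)) | specialize (IHb x (or_intror H)) ]; lia.
Qed.

Theorem lemma5p5 : forall A : term, exists B : term, clean B /\ alpha_star A B.
Proof.
  intros A.
  destruct (clean_variant_exists A _ (vars_below_maxvar A)) as [m [B HB]].
  exists B; split.
  - exact (clean_of_clean_variant _ _ _ _ (vars_below_maxvar A) HB).
  - apply HB.
Qed.
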